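(* Let $\psi$ be a colouring. 1. The equation $\psi\ltimes\xi=\psi[+1]$ has a regular summable solution $\xi\in\mathcal C_0$ if and only if $\psi$, viewed as an element of $\mathcal C_1$, is regular. 2. Suppose that $\psi$ is regular, and let $d\ge0$. Then $\xi\mapsto\psi\ltimes\xi$ is a $\mathbb k[[h]]$-linear bijection from the set of regular summable sequences in $\mathcal C_d$ onto the set of regular sequences of Verma type in $\mathcal C_d$.
   Context: $\mathbb k$ is a field of characteristic zero, and $\mathbb k[[h]]$ is the ring of formal power series over $\mathbb k$. A colouring is a sequence $\psi=(\psi^k)_{k\ge1}$ of functions $\psi^k:\mathbb Z\to\mathbb k[[h]]$ satisfying: - (C1) $\psi^k(n)\equiv k(n-k+1)\bmod h$; - (C2) $\psi^{n+1}(n)=0$ for all $n\ge0$; - (C3) $\psi^{n+k+1}(n)=\psi^k(-n-2)$ for all $k\ge1$ and all $n\ge0$. Sequences. For $d\in\mathbb N$, $\mathcal C_d$ is the $\mathbb k[[h]]$-module of sequences $f=(f^k)_{k\ge d}$ of functions $f^k:\mathbb Z\to\mathbb k[[h]]$. We write $f^k(n)=\sum_{m\ge0}f^k_m(n)h^m$ with $f^k_m:\mathbb Z\to\mathbb k$. - $f$ is summable if for each $m$ one has $f^k_m\equiv0$ for all sufficiently large $k$. - $f$ is regular if each $f^k_m$ is a polynomial function of $n$, and for each $m$ the degree of $f^k_m$ is bounded independently of $k$. - $f$ is of Verma type if $f^k(n)=0$ for all $k\ge d$ and $n\ge0$ with $n+1\le k\le n+d$, and $f^{n+k+1}(n)=f^k(-n-2)$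 for all $k\ge d$ and $n\ge0$. A colouring is an element of $\mathcal C_1$. Define $\psi[+1]\in\mathcal C_0$ by $(\psi[+1])^k=\psi^{k+1}$ for $k\ge0$. For $\xi\in\mathcal C_d$, define $\psi\ltimes\xi\in\mathcal C_d$ by $$(\psi\ltimes\xi)^k(n)=\sum_{a=d}^k\Big(\prod_{b=k-a+1}^k\psi^b(n)\Big)\xi^a(n-2k)\qquad(k\ge d),$$ where the empty product is $1$. *)

From HB Require Import structures.
From mathcomp Require Import all_boot all_order all_algebra.
Set Implicit Arguments. Unset Strict Implicit. Unset Printing Implicit Defensive.
Import Order.TTheory GRing.Theory Num.Theory.
Local Open Scope ring_scope.

(* Formal power series k[[h]], represented by their coefficient sequence:
   f = \sum_m f m h^m. *)
Definition ps (K : fieldType) := nat -> K.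

Section PS.
Variable K : fieldType.
Definition ps0 : ps K := fun _ => 0.
Definition ps1 : ps K := fun m => if m == 0%N then 1 else 0.
Definition ps_add (f g : ps K) : ps K := fun m => f m + g m.
Definition ps_mul (f g : ps K) : ps K :=
  fun m => \sum_(i < m.+1) f i * g (m - i)%N.

(* A sequence (f^k)_{k>=d} of functions Z -> k[[h]], stored as a total
   function nat -> int -> ps K that is zero for indices k < d (canonical
   representative; C_d is identified with such functions). *)
Definition sqc := nat -> int -> ps K.

Definition inC (d : nat) (f : sqc) : Prop := forall k, (k < d)%N -> f k = fun _ => ps0.

Definition summable (f : sqc) : Prop :=
  forall m : nat, exists k0 : nat, forall k : nat, (k0 <= k)%N -> forall n : int, f k n m = 0.

Definition regular (d : nat) (f : sqc) : Prop :=
  forall m : nat, exists D : nat, forall k : nat, (d <= k)%N ->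
    exists p : {poly K}, (size p <= D)%N /\ forall n : int, f k n m = p.[n%:~R].

Definition verma (d : nat) (f : sqc) : Prop :=
  (forall (k n : nat), (d <= k)%N -> (n + 1 <= k <= n + d)%N -> f k (n%:Z) = ps0) /\
  (forall (k n : nat), (d <= k)%N -> f (n + k + 1)%N (n%:Z) = f k (- (n%:Z) - 2)).

Definition colouring (psi : sqc) : Prop :=
  [/\ inC 1 psi,
      (forall (k : nat) (n : int), (1 <= k)%N ->
          psi k n 0%N = (k%:Z * (n - k%:Z + 1))%:~R),
      (forall n : nat, psi n.+1 (n%:Z) = ps0) &
      (forall (k n : nat), (1 <= k)%N -> psi (n + k + 1)%N (n%:Z) = psi k (- (n%:Z) - 2))].

Definition shift1 (psi : sqc) : sqc := fun k => psi k.+1.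

Definition ltimes (d : nat) (psi xi : sqc) : sqc :=
  fun k n => if (k < d)%N then ps0 else
    \big[ps_add/ps0]_(d <= a < k.+1)
       ps_mul (\big[ps_mul/ps1]_((k - a + 1)%N <= b < k.+1) psi b n)
              (xi a (n - (2 * k)%N%:Z)).

Definition sqc_add (f g : sqc) : sqc := fun k n => ps_add (f k n) (g k n).
Definition sqc_scale (c : ps K) (f : sqc) : sqc := fun k n => ps_mul c (f k n).
End PS.

From HB Require Import structures.
From mathcomp Require Import all_boot all_order all_algebra.
From mathcomp Require Import zify ring.
From Stdlib Require Import ClassicalEpsilon FunctionalExtensionality.
Import GRing.Theory.
Local Open Scope ring_scope.
Set Implicit Arguments. Unset Strict Implicit. Unset Printing Implicit Defensive.

(* Modulo h, psi ⋉ - acts on K-valued sequences by a triangular operator whose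
   diagonal entry at level k is, by (C1), psi^1_0(n) ... psi^k_0(n) =
   k! n (n-1) ... (n-k+1), nonzero for n >= k in characteristic 0; hence it is
   injective on polynomial sequences.  It is also onto the polynomial sequences
   of Verma type: the Verma zeros n = 0, ..., d-1 of f^d make f^d divisible by
   the diagonal entry, which lets us solve for xi^d and pass to a Verma sequence
   in C_{d+1}; once d exceeds the degree bound, the d Verma zeros of each f^k
   force the remainder to vanish.  As psi ⋉ - is also triangular for the h-adic
   filtration, both properties lift coefficient by coefficient in h.
   Conversely, a solution of psi ⋉ xi = psi[+1] is forced modulo h, and the
   h^M-coefficient of the equation expresses psi^{k+1}_M as psi^k_M plus terms
   in psi_0, ..., psi_{M-1} and xi, which bounds the degree of psi_M uniformly
   in k by induction on M. *)

Section PowerSeries.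
Variable K : fieldType.
Implicit Types f g h : ps K.

Lemma ps_ext f g : (forall m, f m = g m) -> f = g.
Proof. exact: functional_extensionality. Qed.

Definition ps_trunc (m : nat) f : {poly K} := \poly_(i < m.+1) f i.

Lemma coef_ps_mul m i f g : (i <= m)%N ->
  ps_mul f g i = (ps_trunc m f * ps_trunc m g)`_i.
Proof.
move=> im; rewrite coefM /ps_mul; apply: eq_bigr => j _.
have jm : (j < m.+1)%N by apply: leq_trans (ltn_ord j) _; rewrite ltnS.
by rewrite !coef_poly jm ltnS (leq_trans (leq_subr _ _) im).
Qed.

Lemma coefM_eq_low (p p' q q' : {poly K}) i :
  (forall j, (j <= i)%N -> p`_j = p'`_j /\ q`_j = q'`_j) ->
  (p * q)`_i = (p' * q')`_i.
Proof.
move=> E; rewrite !coefM; apply: eq_bigr => j _.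
have [-> _] := E j (ltn_ord j); have [_ ->] // := E (i - j)%N (leq_subr _ _).
Qed.

Lemma ps_addA : associative (@ps_add K).
Proof. by move=> f g h; apply: ps_ext => m; rewrite /ps_add addrA. Qed.

Lemma ps_addC : commutative (@ps_add K).
Proof. by move=> f g; apply: ps_ext => m; rewrite /ps_add addrC. Qed.

Lemma ps_add0l : left_id (ps0 K) (@ps_add K).
Proof. by move=> f; apply: ps_ext => m; rewrite /ps_add add0r. Qed.

Lemma ps_mulC : commutative (@ps_mul K).
Proof. by move=> f g; apply: ps_ext => m; rewrite !(coef_ps_mul _ _ (leqnn m)) mulrC. Qed.

Lemma ps_mulA : associative (@ps_mul K).
Proof.
move=> f g h; apply: ps_ext => m; rewrite !(coef_ps_mul _ _ (leqnn m)).
rewrite (@coefM_eq_low _ (ps_trunc m f) _ (ps_trunc m g * ps_trunc m h)); last first.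
  by move=> j jm; split=> //; rewrite coef_poly ltnS jm; apply: coef_ps_mul.
rewrite [RHS](@coefM_eq_low _ (ps_trunc m f * ps_trunc m g) _ (ps_trunc m h)).
  by rewrite mulrA.
by move=> j jm; split=> //; rewrite coef_poly ltnS jm; apply: coef_ps_mul.
Qed.

Lemma ps_mul1l : left_id (ps1 K) (@ps_mul K).
Proof.
move=> f; apply: ps_ext => m; rewrite /ps_mul big_ord_recl /= mul1r subn0.
by rewrite big1 ?addr0 // => i _; rewrite /ps1 /= mul0r.
Qed.

Lemma ps_mul0l : left_zero (ps0 K) (@ps_mul K).
Proof. by move=> f; apply: ps_ext => m; rewrite /ps_mul big1 // => i _; rewrite mul0r. Qed.

Lemma ps_mul0r : right_zero (ps0 K) (@ps_mul K).
Proof. by move=> f; rewrite ps_mulC ps_mul0l. Qed.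

Lemma ps_mulDr : right_distributive (@ps_mul K) (@ps_add K).
Proof.
move=> f g h; apply: ps_ext => m; rewrite /ps_mul /ps_add -big_split /=.
by apply: eq_bigr => i _; rewrite mulrDr.
Qed.

Lemma ps_mulDl : left_distributive (@ps_mul K) (@ps_add K).
Proof. by move=> f g h; rewrite ps_mulC ps_mulDr !(ps_mulC h). Qed.

HB.instance Definition _ :=
  Monoid.isComLaw.Build (ps K) (ps0 K) (@ps_add K) ps_addA ps_addC ps_add0l.
HB.instance Definition _ :=
  Monoid.isComLaw.Build (ps K) (ps1 K) (@ps_mul K) ps_mulA ps_mulC ps_mul1l.
HB.instance Definition _ :=
  Monoid.isMulLaw.Build (ps K) (ps0 K) (@ps_mul K) ps_mul0l ps_mul0r.
HB.instance Definition _ :=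
  Monoid.isAddLaw.Build (ps K) (@ps_mul K) (@ps_add K) ps_mulDl ps_mulDr.

Lemma ps_mul_coef0 f g : ps_mul f g 0%N = f 0%N * g 0%N.
Proof. by rewrite /ps_mul big_ord1. Qed.

Lemma coef_big_ps_add (I : Type) (r : seq I) (P : pred I) (F : I -> ps K) j :
  (\big[@ps_add K/ps0 K]_(i <- r | P i) F i) j = \sum_(i <- r | P i) F i j.
Proof. exact: (big_morph (fun f : ps K => f j)). Qed.

Lemma coef0_big_ps_mul (I : Type) (r : seq I) (F : I -> ps K) :
  (\big[@ps_mul K/ps1 K]_(i <- r) F i) 0%N = \prod_(i <- r) F i 0%N.
Proof. exact: (big_morph (fun f : ps K => f 0%N) ps_mul_coef0). Qed.

End PowerSeries.

Lemma big_iota_shift (R : Type) (idx : R) (op : R -> R -> R) (F G : nat -> R) s t n :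
  (forall i, (i < n)%N -> F (s + i)%N = G (t + i)%N) ->
  \big[op/idx]_(b <- iota s n) F b = \big[op/idx]_(b <- iota t n) G b.
Proof.
elim: n s t => [|n IH] s t E; first by rewrite !big_nil.
rewrite /= !big_cons; have := E 0%N isT; rewrite !addn0 => ->.
by congr (op _ _); apply: IH => i lt_in; rewrite !addSnnS; apply: E.
Qed.

Section PolynomialFunctions.
Variable K : fieldType.

Definition polyfun (D : nat) (g : int -> K) :=
  exists p : {poly K}, (size p <= D.+1)%N /\ forall n, g n = p.[n%:~R].

Lemma polyfun_le D D' g : (D <= D')%N -> polyfun D g -> polyfun D' g.
Proof. by move=> leDD' [p [sp Hp]]; exists p; split=> //; apply: leq_trans sp _. Qed.

Lemma polyfun_ext D g h : g =1 h -> polyfun D g -> polyfun D h.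
Proof. by move=> E [p [sp Hp]]; exists p; split=> // n; rewrite -E. Qed.

Lemma polyfun_const D c : polyfun D (fun _ => c).
Proof.
exists c%:P; split; last by move=> n; rewrite hornerC.
exact: leq_trans (size_polyC_leq1 c) _.
Qed.

Lemma polyfun_id : polyfun 1 (fun n => n%:~R).
Proof. by exists 'X; split; [rewrite size_polyX | move=> n; rewrite hornerX]. Qed.

Lemma polyfun_add D g h : polyfun D g -> polyfun D h -> polyfun D (fun n => g n + h n).
Proof.
move=> [p [sp Hp]] [q [sq Hq]]; exists (p + q); split.
  by apply: leq_trans (size_polyD _ _) _; rewrite geq_max sp sq.
by move=> n; rewrite hornerD Hp Hq.
Qed.

Lemma polyfun_opp D g : polyfun D g -> polyfun D (fun n => - g n).
Proof.
move=> [p [sp Hp]]; exists (- p).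
by split; [rewrite size_polyN | move=> n; rewrite hornerN Hp].
Qed.

Lemma polyfun_mul D1 D2 g h :
  polyfun D1 g -> polyfun D2 h -> polyfun (D1 + D2) (fun n => g n * h n).
Proof.
move=> [p [sp Hp]] [q [sq Hq]]; exists (p * q); split.
  by apply: leq_trans (size_polyMleq _ _) _; move: sp sq; lia.
by move=> n; rewrite hornerM Hp Hq.
Qed.

Lemma polyfun_scale D c g : polyfun D g -> polyfun D (fun n => c * g n).
Proof. exact: polyfun_mul (polyfun_const 0 c). Qed.

Lemma polyfun_sum (I : Type) (r : seq I) (P : pred I) D (F : I -> int -> K) :
  (forall i, P i -> polyfun D (F i)) -> polyfun D (fun n => \sum_(i <- r | P i) F i n).
Proof.
move=> HF; elim: r => [|x r IH].
  by apply: polyfun_ext (polyfun_const D 0) => n; rewrite big_nil.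
case Px: (P x); last by apply: polyfun_ext IH => n; rewrite big_cons Px.
by apply: polyfun_ext (polyfun_add (HF x Px) IH) => n; rewrite big_cons Px.
Qed.

Lemma polyfun_prod (I : Type) (r : seq I) D (F : I -> int -> K) :
  (forall i, polyfun D (F i)) -> polyfun (size r * D) (fun n => \prod_(i <- r) F i n).
Proof.
move=> HF; elim: r => [|x r IH].
  by apply: polyfun_ext (polyfun_const _ 1) => n; rewrite big_nil.
by apply: polyfun_ext (polyfun_mul (HF x) IH) => n; rewrite big_cons.
Qed.

Lemma polyfun_shift D g (c : int) : polyfun D g -> polyfun D (fun n => g (n + c)).
Proof.
move=> [p [sp Hp]]; exists (p \Po ('X + (c%:~R)%:P)); split.
  apply: leq_trans (size_comp_poly_leq _ _) _.
  by rewrite size_XaddC muln1; move: sp; lia.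
by move=> n; rewrite horner_comp hornerD hornerX hornerC Hp intrD.
Qed.

Hypothesis charK : [pchar K] =i pred0.

Lemma intr_eq0_pchar0 (z : int) : (z%:~R == 0 :> K) = (z == 0).
Proof.
have natr_eq0 := (pcharf0P K).1 charK.
by case: z => n; rewrite ?NegzE ?mulrNz ?oppr_eq0 -pmulrn natr_eq0.
Qed.

Lemma intr_inj_pchar0 : injective (fun z : int => z%:~R : K).
Proof. by move=> a b /eqP; rewrite -subr_eq0 -intrB intr_eq0_pchar0 subr_eq0 => /eqP. Qed.

Lemma polyfun_eq0 D g (s : int) : polyfun D g ->
  (forall i, (i <= D)%N -> g (s + i%:Z) = 0) -> forall n, g n = 0.
Proof.
move=> [p [sp Hp]] g0 n; rewrite Hp.
suff -> : p = 0 by rewrite horner0.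
apply: (@roots_geq_poly_eq0 _ p [seq (s + i%:Z)%:~R | i <- iota 0 D.+1]).
- apply/allP => x /mapP [i]; rewrite mem_iota add0n ltnS => iD ->.
  by rewrite /root -Hp g0.
- by rewrite map_inj_uniq ?iota_uniq // => i i' /intr_inj_pchar0 E; lia.
- by rewrite size_map size_iota.
Qed.

End PolynomialFunctions.

Section Ltimes.
Variable K : fieldType.
Implicit Types (psi xi eta : sqc K) (z w : nat -> int -> K).

Definition psiprod psi (k a : nat) (n : int) : ps K :=
  \big[@ps_mul K/ps1 K]_((k - a + 1)%N <= b < k.+1) psi b n.

Definition psiprod0 psi (k a : nat) (n : int) : K :=
  \prod_((k - a + 1)%N <= b < k.+1) psi b n 0%N.

Definition ltimes_lead psi z (k : nat) (n : int) : K :=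
  \sum_(0 <= a < k.+1) psiprod0 psi k a n * z a (n - (2 * k)%N%:Z).

Definition hcoef (m : nat) (f : sqc K) : nat -> int -> K := fun k n => f k n m.

Definition hterm (m : nat) z : sqc K := fun a n j => if j == m then z a n else 0.

Lemma psiprod_coef0 psi k a n : psiprod psi k a n 0%N = psiprod0 psi k a n.
Proof. exact: coef0_big_ps_mul. Qed.

Lemma psiprod_0 psi k n : psiprod psi k 0 n = ps1 K.
Proof. by rewrite /psiprod subn0 addn1 /index_iota subnn big_nil. Qed.

Lemma psiprod_1 psi k n : (1 <= k)%N -> psiprod psi k 1 n = psi k n.
Proof.
move=> k1; rewrite /psiprod /index_iota (_ : k - 1 + 1 = k)%N; last by lia.
by rewrite subSnn big_cons big_nil ps_mulC ps_mul1l.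
Qed.

Lemma psiprod0_0 psi k n : psiprod0 psi k 0 n = 1.
Proof. by rewrite -psiprod_coef0 psiprod_0. Qed.

Lemma psiprod0_1 psi k n : (1 <= k)%N -> psiprod0 psi k 1 n = psi k n 0%N.
Proof. by move=> k1; rewrite -psiprod_coef0 psiprod_1. Qed.

Lemma ltimes_coef d psi xi k n j : (d <= k)%N ->
  ltimes d psi xi k n j = \sum_(d <= a < k.+1) \sum_(i < j.+1)
    psiprod psi k a n i * xi a (n - (2 * k)%N%:Z) (j - i)%N.
Proof. by move=> dk; rewrite /ltimes ltnNge dk; apply: coef_big_ps_add. Qed.

Lemma inC_ltimes d psi xi : inC d (ltimes d psi xi).
Proof. by move=> k kd; apply: functional_extensionality => n; rewrite /ltimes kd. Qed.

Lemma ltimes_inC d psi xi : inC d xi -> ltimes d psi xi = ltimes 0 psi xi.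
Proof.
move=> xiC; apply: functional_extensionality => k.
apply: functional_extensionality => n; apply: ps_ext => j.
have low_terms a : (a < d)%N -> \sum_(i < j.+1)
    psiprod psi k a n i * xi a (n - (2 * k)%N%:Z) (j - i)%N = 0.
  by move=> ad; rewrite xiC // big1 // => i _; rewrite /ps0 mulr0.
rewrite [RHS]ltimes_coef //; have [kd | dk] := ltnP k d.
  rewrite /ltimes kd /ps0 big_nat_cond big1 // => a /andP [/andP [_ ak] _].
  by apply: low_terms; apply: leq_trans kd.
rewrite ltimes_coef // [RHS](@big_cat_nat _ _ _ d) //=; last by lia.
rewrite [X in _ = X + _]big_nat_cond [X in _ = X + _]big1 ?add0r //.
by move=> a /andP [/andP [_ ad] _]; apply: low_terms.
Qed.

Lemma ltimes_linear d psi c xi eta :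
  ltimes d psi (sqc_add (sqc_scale c xi) eta)
  = sqc_add (sqc_scale c (ltimes d psi xi)) (ltimes d psi eta).
Proof.
apply: functional_extensionality => k; apply: functional_extensionality => n.
rewrite /ltimes /sqc_add /sqc_scale; case: (k < d)%N.
  by rewrite ps_mul0r Monoid.mul1m.
rewrite big_distrr -big_split; apply: eq_bigr => a _ /=.
by rewrite ps_mulDr !ps_mulA (ps_mulC c).
Qed.

Lemma ltimesD psi xi eta k n j :
  ltimes 0 psi (sqc_add xi eta) k n j = ltimes 0 psi xi k n j + ltimes 0 psi eta k n j.
Proof.
rewrite !ltimes_coef // -big_split; apply: eq_bigr => a _.
by rewrite -big_split; apply: eq_bigr => i _; apply: mulrDr.
Qed.

Lemma ltimesB psi xi eta k n j :
  ltimes 0 psi (fun a m l => xi a m l - eta a m l) k n j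
  = ltimes 0 psi xi k n j - ltimes 0 psi eta k n j.
Proof.
rewrite !ltimes_coef // -sumrB; apply: eq_bigr => a _.
by rewrite -sumrB; apply: eq_bigr => i _; rewrite -mulrBr.
Qed.

Lemma ltimes_coef_eq psi xi eta j :
  (forall a n l, (l <= j)%N -> xi a n l = eta a n l) ->
  forall k n, ltimes 0 psi xi k n j = ltimes 0 psi eta k n j.
Proof.
move=> E k n; rewrite !ltimes_coef //; apply: eq_bigr => a _.
by apply: eq_bigr => i _; rewrite E // leq_subr.
Qed.

Lemma ltimes_lowest psi xi m :
  (forall a n l, (l < m)%N -> xi a n l = 0) ->
  forall k n, ltimes 0 psi xi k n m = ltimes_lead psi (hcoef m xi) k n.
Proof.
move=> low k n; rewrite ltimes_coef // /ltimes_lead; apply: eq_bigr => a _.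
rewrite big_ord_recl /= subn0 psiprod_coef0 big1 ?addr0 // => i _.
by rewrite low ?mulr0 //; have := ltn_ord i; rewrite /bump /=; lia.
Qed.

Lemma ltimes_coef0 psi xi k n :
  ltimes 0 psi xi k n 0%N = ltimes_lead psi (hcoef 0 xi) k n.
Proof. exact: ltimes_lowest. Qed.

Lemma ltimes_hterm psi m z k n :
  ltimes 0 psi (hterm m z) k n m = ltimes_lead psi z k n.
Proof.
rewrite ltimes_lowest => [|a n' l lm]; last by rewrite /hterm ltn_eqF.
by congr ltimes_lead; do 2!apply: functional_extensionality => ?; rewrite /hcoef /hterm eqxx.
Qed.

Lemma ltimes_hterm_lt psi m z k n j : (j < m)%N -> ltimes 0 psi (hterm m z) k n j = 0.
Proof.
move=> jm; rewrite ltimes_coef // big1 // => a _; rewrite big1 // => i _.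
by rewrite /hterm ifN ?mulr0 //; apply/eqP; have := leq_subr i j; lia.
Qed.

Lemma ltimes_leadD psi z w k n :
  ltimes_lead psi (fun a m => z a m + w a m) k n
  = ltimes_lead psi z k n + ltimes_lead psi w k n.
Proof. by rewrite /ltimes_lead -big_split; apply: eq_bigr => a _; rewrite mulrDr. Qed.

Lemma ltimes_leadB psi z w k n :
  ltimes_lead psi (fun a m => z a m - w a m) k n
  = ltimes_lead psi z k n - ltimes_lead psi w k n.
Proof. by rewrite /ltimes_lead -sumrB; apply: eq_bigr => a _; rewrite mulrBr. Qed.

(* Some factor psi^{n+1}(n) = 0 (C2) occurs in the product. *)
Lemma psiprod_eq0 psi k a (n : nat) : colouring psi ->
  (k - a <= n < k)%N -> psiprod psi k a n = ps0 K.
Proof.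
case=> _ _ C2 _ kan; rewrite /psiprod (big_rem n.+1) ?C2; first exact: ps_mul0l.
by rewrite mem_index_iota; lia.
Qed.

Lemma psiprod_shift psi k a (n : nat) : colouring psi -> (a <= k)%N ->
  psiprod psi (n + k + 1) a n = psiprod psi k a (- n%:Z - 2).
Proof.
case=> _ _ _ C3 ak; rewrite /psiprod /index_iota.
have -> : ((n + k + 1).+1 - (n + k + 1 - a + 1) = a)%N by lia.
have -> : (k.+1 - (k - a + 1) = a)%N by lia.
apply: big_iota_shift => i ia.
have -> : (n + k + 1 - a + 1 + i = n + (k - a + 1 + i) + 1)%N by lia.
by rewrite C3 //; lia.
Qed.

Lemma ltimes_verma d psi xi : colouring psi -> inC d xi -> verma d (ltimes d psi xi).
Proof.
move=> Hpsi xiC; split.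
  move=> k n dk /andP [k1 k2]; apply: ps_ext => j.
  rewrite ltimes_coef // big_nat_cond big1 // => a /andP [/andP [da ak] _].
  rewrite psiprod_eq0 //; last by lia.
  by rewrite big1 // => i _; rewrite /ps0 mul0r.
move=> k n dk; rewrite ltimes_inC //; apply: ps_ext => j.
rewrite !ltimes_coef // (@big_cat_nat _ _ _ k.+1) //=; last by lia.
rewrite [X in _ + X]big_nat_cond [X in _ + X]big1 ?addr0; last first.
  move=> a /andP [/andP [ka an] _]; rewrite psiprod_eq0 //; last by lia.
  by rewrite big1 // => i _; rewrite /ps0 mul0r.
rewrite big_nat_cond [RHS]big_nat_cond; apply: eq_bigr => a /andP [/andP [_ ak] _].
have -> : n%:Z - (2 * (n + k + 1))%N%:Z = - n%:Z - 2 - (2 * k)%N%:Z by lia.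
by rewrite psiprod_shift.
Qed.

End Ltimes.

Lemma exists_bound_le (Q : nat -> nat -> Prop) :
  (forall m, exists D, Q m D) -> (forall m D D', (D <= D')%N -> Q m D -> Q m D') ->
  forall j, exists D, forall m, (m <= j)%N -> Q m D.
Proof.
move=> HQ Qmono; elim=> [|j [D HD]].
  by have [D HD] := HQ 0%N; exists D => m; rewrite leqn0 => /eqP ->.
have [D' HD'] := HQ j.+1; exists (maxn D D') => m.
rewrite leq_eqVlt => /orP [/eqP -> | mj]; first by apply: Qmono HD'; rewrite leq_maxr.
by apply: Qmono (HD m mj); rewrite leq_maxl.
Qed.

Section Regularity.
Variable K : fieldType.
Implicit Types psi xi f g : sqc K.

Lemma regular_polyfun d f : regular d f <->
  forall m, exists D, forall k, (d <= k)%N -> polyfun D (fun n => f k n m).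
Proof.
split=> freg m; have [D HD] := freg m.
  by exists D => k dk; have [p [sp Hp]] := HD k dk; exists p; split=> //; apply: leqW.
by exists D.+1 => k dk; have [p [sp Hp]] := HD k dk; exists p.
Qed.

Lemma regular_bound_le d f : inC d f -> regular d f ->
  forall j, exists D, forall a l, (l <= j)%N -> polyfun D (fun n => f a n l).
Proof.
move=> fC /regular_polyfun freg j.
have [D HD] := exists_bound_le
  (Q := fun l D => forall a, (d <= a)%N -> polyfun D (fun n => f a n l))
  freg (fun m D D' DD' HD a da => polyfun_le DD' (HD a da)) j.
exists D => a l lj; have [ad | da] := ltnP a d; last exact: HD.
by rewrite fC //; apply: polyfun_const.
Qed.

Lemma summable_bound_le xi : summable xi ->
  forall j, exists A, forall a l n, (A <= a)%N -> (l <= j)%N -> xi a n l = 0.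
Proof.
move=> xis j; have [A HA] := exists_bound_le
  (Q := fun l A => forall a, (A <= a)%N -> forall n, xi a n l = 0)
  xis (fun m A A' AA' HA a Aa => HA a (leq_trans AA' Aa)) j.
by exists A => a l n Aa lj; apply: HA.
Qed.

Lemma inC_0 f : inC 0 f.
Proof. by []. Qed.

Lemma inC_sqc_add d f g : inC d f -> inC d g -> inC d (sqc_add f g).
Proof.
move=> fC gC k kd; apply: functional_extensionality => n; apply: ps_ext => j.
by rewrite /sqc_add /ps_add fC ?gC // /ps0 addr0.
Qed.

Lemma regular_sqc_add d f g : regular d f -> regular d g -> regular d (sqc_add f g).
Proof.
move=> /regular_polyfun freg /regular_polyfun greg; apply/regular_polyfun => m.
have [D1 H1] := freg m; have [D2 H2] := greg m.
exists (maxn D1 D2) => k dk; apply: polyfun_add.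
  by apply: polyfun_le (H1 k dk); apply: leq_maxl.
by apply: polyfun_le (H2 k dk); apply: leq_maxr.
Qed.

Lemma summable_sqc_add f g : summable f -> summable g -> summable (sqc_add f g).
Proof.
move=> fs gs m; have [A1 H1] := fs m; have [A2 H2] := gs m.
exists (maxn A1 A2) => k; rewrite geq_max => /andP [k1 k2] n.
by rewrite /sqc_add /ps_add H1 ?H2 ?addr0.
Qed.

Lemma regular_hterm d m (z : nat -> int -> K) :
  (exists D, forall a, polyfun D (z a)) -> regular d (hterm m z).
Proof.
move=> [D zD]; apply/regular_polyfun => j; exists D => k _.
rewrite /hterm; case: eqP => _; [exact: zD | exact: polyfun_const].
Qed.

Lemma summable_hterm m (z : nat -> int -> K) :
  (exists A, forall a n, (A <= a)%N -> z a n = 0) -> summable (hterm m z).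
Proof. by move=> [A zA] j; exists A => k Ak n; rewrite /hterm zA ?if_same. Qed.

Lemma polyfun_big_ps_mul_coef (F : nat -> int -> ps K) (r : seq nat) D N :
  (forall b l, (l < N)%N -> polyfun D (fun n => F b n l)) ->
  forall l, (l < N)%N ->
  polyfun (size r * D) (fun n => (\big[@ps_mul K/ps1 K]_(b <- r) F b n) l).
Proof.
move=> FD; elim: r => [|x r IH] l lN.
  by apply: polyfun_ext (polyfun_const _ (ps1 K l)) => n; rewrite big_nil.
apply: (@polyfun_ext _ _ (fun n => \sum_(t < l.+1) F x n t *
   (\big[@ps_mul K/ps1 K]_(b <- r) F b n) (l - t)%N)).
  by move=> n; rewrite big_cons.
apply: polyfun_sum => t _; rewrite mulSn; apply: polyfun_mul.
  by apply: FD; apply: leq_ltn_trans lN; rewrite -ltnS.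
by apply: IH; apply: leq_ltn_trans lN; apply: leq_subr.
Qed.

Lemma polyfun_psiprod_coef psi D N :
  (forall b l, (l < N)%N -> polyfun D (fun n => psi b n l)) ->
  forall k a l, (l < N)%N -> polyfun (a * D) (fun n => psiprod psi k a n l).
Proof.
move=> psiD k a l lN.
apply: polyfun_le (polyfun_big_ps_mul_coef (index_iota (k - a + 1) k.+1) psiD lN).
by rewrite leq_mul2r size_iota; apply/orP; right; lia.
Qed.

Lemma polyfun_ltimes_partial psi xi N M Dp Dx A k :
  (forall b l, (l < N)%N -> polyfun Dp (fun n => psi b n l)) ->
  (forall a l, (l <= M)%N -> polyfun Dx (fun n => xi a n l)) ->
  (forall a l n, (A <= a)%N -> (l <= M)%N -> xi a n l = 0) ->
  polyfun (A * Dp + Dx) (fun n => \sum_(0 <= a < k.+1) \sum_(i < N)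
      psiprod psi k a n i * xi a (n - (2 * k)%N%:Z) (M - i)%N).
Proof.
move=> psiD xiD xiA; apply: polyfun_sum => a _; have [aA | Aa] := ltnP a A.
  apply: polyfun_sum => i _; apply: polyfun_mul.
    apply: (polyfun_le (D := a * Dp)); first by rewrite leq_mul2r ltnW ?orbT.
    exact: polyfun_psiprod_coef psiD _ _ _ (ltn_ord i).
  by apply: (polyfun_shift (g := fun n => xi a n (M - i)%N)); apply: xiD; apply: leq_subr.
apply: polyfun_ext (polyfun_const _ 0) => n; rewrite big1 // => i _.
by rewrite xiA ?mulr0 // leq_subr.
Qed.

Lemma regular_ltimes d psi xi : inC 1 psi -> regular 1 psi ->
  inC d xi -> regular d xi -> summable xi -> regular d (ltimes d psi xi).
Proof.
move=> psiC psireg xiC xireg xis; apply/regular_polyfun => j.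
have [Dp psiD] := regular_bound_le psiC psireg j.
have [Dx xiD] := regular_bound_le xiC xireg j.
have [A xiA] := summable_bound_le xis j.
exists (A * Dp + Dx) => k dk; rewrite ltimes_inC //.
apply: polyfun_ext (polyfun_ltimes_partial (N := j.+1) k _ xiD xiA) => [n|].
  by rewrite ltimes_coef.
by move=> b l; rewrite ltnS; apply: psiD.
Qed.

End Regularity.

Section LeadingOrder.
Variable K : fieldType.
Hypothesis charK : [pchar K] =i pred0.
Variable psi : sqc K.
Hypothesis Hpsi : colouring psi.
Implicit Types (f : sqc K) (z w g : nat -> int -> K).

Definition sinC d z := forall k n, (k < d)%N -> z k n = 0.

Definition sverma d z :=
  (forall k n : nat, (d <= k)%N -> (n + 1 <= k <= n + d)%N -> z k n%:Z = 0) /\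
  (forall k n : nat, (d <= k)%N -> z (n + k + 1)%N n%:Z = z k (- n%:Z - 2)).

Definition polyseq d D z := forall k, (d <= k)%N -> polyfun D (z k).

Definition hsingle (d : nat) (x : int -> K) : nat -> int -> K :=
  fun a m => if a == d then x m else 0.

Lemma sverma_hcoef d m f : verma d f -> sverma d (hcoef m f).
Proof.
by move=> [V1 V2]; split=> [k n dk kn | k n dk]; rewrite /hcoef; [rewrite V1 | rewrite V2].
Qed.

Lemma inC_hterm d m z : sinC d z -> inC d (hterm m z).
Proof.
move=> zC k kd; apply: functional_extensionality => n; apply: ps_ext => j.
by rewrite /hterm zC // if_same.
Qed.

Lemma sverma_sub d z w : sverma d z -> sverma d w -> sverma d (fun k n => z k n - w k n).
Proof.
move=> [z1 z2] [w1 w2]; split=> [k n dk kn | k n dk]; first by rewrite z1 ?w1 ?subrr.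
by rewrite z2 ?w2.
Qed.

(* The one new Verma zero, at k = n + d + 1, is g^d(-n-2) by the symmetry. *)
Lemma sverma_succ d g : sinC d g -> sverma d g -> (forall n, g d n = 0) ->
  sinC d.+1 g /\ sverma d.+1 g.
Proof.
move=> gC [V1 V2] gd0; split=> [k n | ].
  by rewrite ltnS leq_eqVlt => /orP [/eqP -> | kd]; [apply: gd0 | apply: gC].
split=> [k n dk /andP [k1 k2] | k n dk]; last by apply: V2; apply: ltnW.
have [kn | kn] := leqP k (n + d); first by apply: V1 => //; [lia | apply/andP].
have -> : k = (n + d + 1)%N by lia.
by rewrite V2.
Qed.

Lemma psi_coef0 b n :
  psi b n 0%N = if b == 0%N then 0 else (b%:Z * (n - b%:Z + 1))%:~R.
Proof.
case: Hpsi => psiC C1 _ _; case: eqP => [-> | /eqP b0]; first by rewrite psiC.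
by rewrite C1 // lt0n.
Qed.

Lemma polyfun_psi_coef0 b : polyfun 1 (fun n => psi b n 0%N).
Proof.
apply: (@polyfun_ext _ _ (fun n => (if b == 0%N then 0 else b%:R) * (n%:~R + (1 - b%:R)))).
  move=> n; rewrite psi_coef0; case: eqP => _; first by rewrite mul0r.
  by rewrite intrM intrD intrB /=; ring.
by apply: polyfun_scale; apply: polyfun_add; [exact: polyfun_id | exact: polyfun_const].
Qed.

Lemma polyfun_psiprod0 k a : polyfun a (psiprod0 psi k a).
Proof.
apply: polyfun_le (polyfun_prod (index_iota (k - a + 1) k.+1) polyfun_psi_coef0).
by rewrite muln1 size_iota; lia.
Qed.

Lemma psiprod0_diag d n :
  psiprod0 psi d d n = d`!%:R * \prod_(i <- iota 0 d) (n%:~R - i%:R).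
Proof.
rewrite /psiprod0 subnn add0n fact_prod natr_prod /index_iota subSS subn0.
rewrite (@big_iota_shift _ _ _ _ (fun b => n%:~R - (b.-1)%:R) 0 1) -?big_split /=.
  apply: big_iota_shift => i _.
  by rewrite psi_coef0 add1n /= intrM intrD intrB /= -natr1; ring.
by move=> i _; rewrite add0n.
Qed.

Lemma psiprod0_diag_neq0 k (n : nat) : (k <= n)%N -> psiprod0 psi k k n%:Z != 0.
Proof.
move=> kn; rewrite /psiprod0 prodf_seq_neq0; apply/allP => b.
rewrite mem_index_iota => /andP [b1 b2]; rewrite /= psi_coef0.
have -> : (b == 0)%N = false by apply/negbTE; lia.
by rewrite intr_eq0_pchar0 // mulf_neq0 //; apply/eqP; lia.
Qed.

Lemma sinC_ltimes_lead d z : sinC d z -> sinC d (ltimes_lead psi z).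
Proof.
move=> zC k n kd; rewrite /ltimes_lead big_nat_cond big1 // => a /andP [/andP [_ ak] _].
by rewrite zC ?mulr0 //; apply: leq_trans kd.
Qed.

Lemma sverma_ltimes_lead d z : sinC d z -> sverma d (ltimes_lead psi z).
Proof.
move=> zC; have E k n : ltimes_lead psi z k n = ltimes d psi (hterm 0 z) k n 0%N.
  by rewrite ltimes_inC ?ltimes_hterm //; apply: inC_hterm.
have [V1 V2] := ltimes_verma Hpsi (inC_hterm 0 zC).
by split=> [k n dk kn | k n dk]; rewrite !E; [rewrite V1 | rewrite V2].
Qed.

(* Only the term a = k of (ltimes_lead z)^k involves z^k, and its coefficient
   k! n (n-1) ... (n-k+1) does not vanish for n >= k. *)
Lemma ltimes_lead_eq0 z : (forall a, exists D, polyfun D (z a)) ->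
  (forall k n, ltimes_lead psi z k n = 0) -> forall a n, z a n = 0.
Proof.
move=> zD lead0; elim/ltn_ind => k IH; have [D zkD] := zD k.
apply: (polyfun_eq0 charK (s := - k%:Z) zkD) => i _.
have := lead0 k (i + k)%N%:Z.
rewrite /ltimes_lead big_nat_recr //= big_nat_cond big1 ?add0r; last first.
  by move=> a /andP [/andP [_ ak] _]; rewrite IH ?mulr0.
have -> : (i + k)%N%:Z - (2 * k)%N%:Z = - k%:Z + i%:Z by lia.
by move/eqP; rewrite mulf_eq0 (negbTE (psiprod0_diag_neq0 (leq_addl _ _))) => /eqP.
Qed.

Lemma ltimes_lead_single d x k n : ltimes_lead psi (hsingle d x) k n =
  if (d <= k)%N then psiprod0 psi k d n * x (n - (2 * k)%N%:Z) else 0.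
Proof.
rewrite /ltimes_lead (eq_bigr (fun a =>
  if a == d then psiprod0 psi k d n * x (n - (2 * k)%N%:Z) else 0)); last first.
  by move=> a _; rewrite /hsingle; case: eqP => [-> | _]; rewrite ?mulr0.
by rewrite -big_mkcond big_nat1_eq /= ltnS.
Qed.

Lemma sverma_polyseq_eq0 d D z : (D < d)%N -> sinC d z -> sverma d z ->
  polyseq d D z -> forall k n, z k n = 0.
Proof.
move=> Dd zC [V1 _] zD k n; have [kd | dk] := ltnP k d; first exact: zC.
apply: (polyfun_eq0 charK (s := (k - d)%N%:Z) (zD k dk)) => i iD.
by rewrite -PoszD; apply: V1 => //; apply/andP; split; lia.
Qed.

(* The Verma zeros n = 0, ..., d-1 of g^d make it divisible by n (n-1) ... (n-d+1),
   which is psiprod0 psi d d n up to the unit d!. *)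
Lemma sverma_diag_factor d D g : sverma d g -> polyfun D (g d) ->
  exists2 x, polyfun (D - d) x & forall n, g d n = ltimes_lead psi (hsingle d x) d n.
Proof.
move=> [V1 _] [p [sp Hp]].
have [q Epq] : exists q, p = q * \prod_(r <- [seq i%:R | i <- iota 0 d]) ('X - r%:P).
  apply: uniq_roots_prod_XsubC; last first.
    rewrite uniq_rootsE map_inj_uniq ?iota_uniq // => i i' E.
    by case: (intr_inj_pchar0 charK (E : i%:Z%:~R = i'%:Z%:~R)).
  apply/allP => r /mapP [i]; rewrite mem_iota add0n => id ->.
  by rewrite /root -[i%:R]/(i%:Z%:~R) -Hp V1 //; apply/andP; split; lia.
have sq : (size q <= (D - d).+1)%N.
  have [-> | q0] := eqVneq q 0; first by rewrite size_poly0.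
  move: sp; rewrite Epq size_Mmonic ?monic_prod_XsubC // size_prod_XsubC size_map size_iota.
  rewrite addnS /= => sqd; rewrite -(leq_add2r d); apply: leq_trans sqd _; lia.
exists (fun m => (d`!%:R)^-1 * q.[(m + (2 * d)%N%:Z)%:~R]).
  by apply: polyfun_scale; apply: (polyfun_shift (g := fun m => q.[m%:~R])); exists q.
move=> n; rewrite ltimes_lead_single leqnn Hp Epq hornerM horner_prod psiprod0_diag.
rewrite big_map (eq_bigr (fun i => n%:~R - i%:R)) => [|i _]; last by rewrite hornerXsubC.
have -> : n - (2 * d)%N%:Z + (2 * d)%N%:Z = n by lia.
have fact_neq0 : d`!%:R != 0 :> K by rewrite (pcharf0P K).1 // -lt0n fact_gt0.
by field.
Qed.

Lemma polyseq_sub_single d D g x : (d <= D)%N -> polyseq d D g -> polyfun (D - d) x ->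
  polyseq d D (fun k n => g k n - ltimes_lead psi (hsingle d x) k n).
Proof.
move=> dD gD xD k dk; apply: polyfun_add; first exact: gD.
apply/polyfun_opp/(@polyfun_ext _ _ (fun n => psiprod0 psi k d n * x (n - (2 * k)%N%:Z))).
  by move=> n; rewrite ltimes_lead_single dk.
have -> : D = (d + (D - d))%N by lia.
by apply: polyfun_mul; [exact: polyfun_psiprod0 | exact: polyfun_shift].
Qed.

Lemma ltimes_lead_surj d D g : sinC d g -> sverma d g -> polyseq d D g ->
  exists z, [/\ sinC d z, (forall a, polyfun D (z a)),
    (forall a n, (D < a)%N -> z a n = 0) & forall k n, ltimes_lead psi z k n = g k n].
Proof.
move Ej : (D.+1 - d)%N => j; elim: j d g Ej => [|j IH] d g Ej gC gV gD.
  exists (fun _ _ => 0); split=> // [a | k n]; first exact: polyfun_const.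
  rewrite (sverma_polyseq_eq0 _ gC gV gD) ?/ltimes_lead ?big1 // => [a _ | ].
    by rewrite mulr0.
  by lia.
have dD : (d <= D)%N by lia.
have [x xD gdE] := sverma_diag_factor gV (gD d (leqnn d)).
pose g' k n := g k n - ltimes_lead psi (hsingle d x) k n.
have [g'C g'V] : sinC d.+1 g' /\ sverma d.+1 g'.
  apply: sverma_succ => [k n kd | | n]; last by rewrite /g' gdE subrr.
    rewrite /g' gC // (sinC_ltimes_lead _ _ kd) ?subrr // => a m ad.
    by rewrite /hsingle ltn_eqF.
  apply: sverma_sub gV (sverma_ltimes_lead _) => a m ad; rewrite /hsingle ltn_eqF //.
have g'D : polyseq d.+1 D g'.
  by move=> k dk; apply: polyseq_sub_single => //; apply: ltnW.
have [|z' [z'C z'D z'0 z'E]] := IH d.+1 g' _ g'C g'V g'D; first by lia.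
exists (fun a m => hsingle d x a m + z' a m); split.
- by move=> a m ad; rewrite /hsingle ltn_eqF // z'C ?add0r //; apply: ltnW.
- move=> a; apply: polyfun_add (z'D a); rewrite /hsingle; case: eqP => _.
    by apply: polyfun_le xD; apply: leq_subr.
  exact: polyfun_const.
- by move=> a m Da; rewrite /hsingle gtn_eqF ?z'0 ?add0r //; apply: leq_trans Da.
- by move=> k n; rewrite ltimes_leadD z'E /g' addrC subrK.
Qed.

End LeadingOrder.

Section Lifting.
Variable K : fieldType.
Hypothesis charK : [pchar K] =i pred0.
Variable psi : sqc K.
Hypothesis Hpsi : colouring psi.

(* The lowest coefficient at which xi and eta differ is killed by ltimes_lead. *)
Lemma ltimes_inj d xi eta : inC d xi -> regular d xi -> inC d eta -> regular d eta ->
  ltimes d psi xi = ltimes d psi eta -> xi = eta.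
Proof.
move=> xiC xireg etaC etareg E.
pose z : sqc K := fun a n l => xi a n l - eta a n l.
suff z0 m : forall a n l, (l < m)%N -> z a n l = 0.
  do 2!apply: functional_extensionality => ?; apply: ps_ext => l.
  by apply/eqP; rewrite -subr_eq0; apply/eqP; apply: (z0 l.+1).
elim: m => [//|m IH] a n l; rewrite ltnS leq_eqVlt => /orP [/eqP -> | lm]; last exact: IH.
move: a n; apply: (ltimes_lead_eq0 charK Hpsi (z := hcoef m z)) => [a | k n].
  have [D1 xiD] := regular_bound_le xiC xireg m.
  have [D2 etaD] := regular_bound_le etaC etareg m.
  exists (maxn D1 D2); apply: polyfun_add; last apply: polyfun_opp.
    by apply: polyfun_le (xiD a m (leqnn m)); apply: leq_maxl.
  by apply: polyfun_le (etaD a m (leqnn m)); apply: leq_maxr.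
by rewrite -ltimes_lowest // ltimesB -(ltimes_inC psi xiC) -(ltimes_inC psi etaC) E subrr.
Qed.

Section Solution.
Variables (d : nat) (f : sqc K).
Hypotheses (psireg : regular 1 psi) (fC : inC d f) (freg : regular d f) (fV : verma d f).

Definition lead_solvable (g z : nat -> int -> K) :=
  [/\ sinC d z, (exists D, forall a, polyfun D (z a)),
      (exists A, forall a n, (A <= a)%N -> z a n = 0)
    & forall k n, ltimes_lead psi z k n = g k n].

(* A junk value unless g is solvable; residual_solvable shows the residuals are. *)
Definition lead_solution (g : nat -> int -> K) : nat -> int -> K :=
  epsilon (inhabits (fun _ _ => 0)) (lead_solvable g).

Definition residual (x : sqc K) (m : nat) : nat -> int -> K :=
  fun k n => f k n m - ltimes 0 psi x k n m.

Fixpoint approx (m : nat) : sqc K :=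
  if m is m'.+1 then
    sqc_add (approx m') (hterm m' (lead_solution (residual (approx m') m')))
  else fun _ _ => ps0 K.

Definition approx_inv (x : sqc K) (m : nat) :=
  [/\ inC d x, regular d x, summable x
    & forall k n j, (j < m)%N -> ltimes 0 psi x k n j = f k n j].

Lemma residual_solvable x m : approx_inv x m ->
  lead_solvable (residual x m) (lead_solution (residual x m)).
Proof.
have psiC : inC 1 psi by case: Hpsi.
move=> [xC xreg xs _]; apply: epsilon_spec.
have rC : sinC d (residual x m).
  by move=> k n kd; rewrite /residual -(ltimes_inC psi xC) inC_ltimes // fC // subrr.
have rV : sverma d (residual x m).
  apply: sverma_sub (sverma_hcoef m fV) _.
  by rewrite -(ltimes_inC _ xC); apply: sverma_hcoef; apply: ltimes_verma.
have [D rD] : exists D, polyseq d D (residual x m).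
  have [D1 fD] := (regular_polyfun _ _).1 freg m.
  have [D2 xD] := (regular_polyfun _ _).1 (regular_ltimes psiC psireg xC xreg xs) m.
  exists (maxn D1 D2) => k dk; apply: polyfun_add; last apply: polyfun_opp.
    by apply: polyfun_le (fD k dk); apply: leq_maxl.
  apply: (@polyfun_ext _ _ (fun n => ltimes d psi x k n m)) => [n|].
    by rewrite ltimes_inC.
  by apply: polyfun_le (xD k dk); apply: leq_maxr.
have [z [zC zD z0 zE]] := ltimes_lead_surj charK Hpsi rC rV rD.
by exists z; split=> //; [exists D | exists D.+1].
Qed.

Lemma approx_invariant m : approx_inv (approx m) m.
Proof.
elim: m => [|m IH].
  split=> // j; last by exists 0%N.
  by exists 0%N => k _; exists 0; rewrite size_poly0; split=> // n; rewrite horner0.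
have [zC zD z0 zE] := residual_solvable IH.
case: IH => xC xreg xs xE; split.
- by apply: inC_sqc_add xC (inC_hterm _ zC).
- by apply: regular_sqc_add xreg (regular_hterm _ _ zD).
- by apply: summable_sqc_add xs (summable_hterm _ z0).
- move=> k n j; rewrite ltnS leq_eqVlt /= ltimesD => /orP [/eqP -> | jm].
    by rewrite ltimes_hterm zE /residual addrC subrK.
  by rewrite ltimes_hterm_lt // addr0 xE.
Qed.

Lemma approx_stable m j k n : (j < m)%N -> approx m k n j = approx j.+1 k n j.
Proof.
elim: m => [//|m IH]; rewrite ltnS leq_eqVlt => /orP [/eqP -> // | jm].
by rewrite /= /sqc_add /ps_add /hterm ltn_eqF // addr0 IH.
Qed.

Lemma ltimes_surj : exists xi : sqc K,
  inC d xi /\ regular d xi /\ summable xi /\ ltimes d psi xi = f.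
Proof.
pose xi : sqc K := fun k n j => approx j.+1 k n j.
have xiC : inC d xi.
  move=> k kd; apply: functional_extensionality => n; apply: ps_ext => j.
  by case: (approx_invariant j.+1) => /(_ k kd) + _ _ _; rewrite /xi => ->.
exists xi; split=> //; split; [|split].
- by move=> j; case: (approx_invariant j.+1) => _ /(_ j) + _ _.
- by move=> j; case: (approx_invariant j.+1) => _ _ /(_ j) + _.
rewrite ltimes_inC //; apply: functional_extensionality => k.
apply: functional_extensionality => n; apply: ps_ext => j.
case: (approx_invariant j.+1) => _ _ _ <- //.
by apply: ltimes_coef_eq => a n' l lj; rewrite /xi approx_stable.
Qed.

End Solution.
End Lifting.

Section Necessity.
Variable K : fieldType.
Hypothesis charK : [pchar K] =i pred0.
Variable psi : sqc K.
Hypothesis Hpsi : colouring psi.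

(* The solution of psi ⋉ xi = psi[+1] modulo h. *)
Definition shift_lead (a : nat) (m : int) : K :=
  if a == 0%N then m%:~R else if a == 1%N then 1 else 0.

Lemma ltimes_lead_shift_lead k n : ltimes_lead psi shift_lead k n = psi k.+1 n 0%N.
Proof.
case: Hpsi => _ C1 _ _; rewrite C1 // /ltimes_lead big_ltn // psiprod0_0 mul1r /shift_lead /=.
case: k => [|k]; first by rewrite big_geq // addr0; congr (_ %:~R); lia.
rewrite big_ltn // psiprod0_1 // /= mulr1 big_nat_cond big1 ?addr0; last first.
  by move=> a /andP [/andP [a2 _] _]; rewrite !ifN ?mulr0 //; apply/eqP; lia.
rewrite C1 // !(intrM, intrD, intrN) -!pmulrn; ring.
Qed.

Variable xi : sqc K.
Hypotheses (xireg : regular 0 xi) (xis : summable xi) (xiE : ltimes 0 psi xi = shift1 psi).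

Lemma solution_coef0 a m : xi a m 0%N = shift_lead a m.
Proof.
apply/eqP; rewrite -subr_eq0; apply/eqP; move: a m.
apply: (ltimes_lead_eq0 charK Hpsi (z := fun a m => xi a m 0%N - shift_lead a m)).
  move=> a; have [D xiD] := regular_bound_le (inC_0 xi) xireg 0.
  exists (maxn 1 D); apply: polyfun_add; last apply: polyfun_opp.
    by apply: polyfun_le (xiD a 0%N (leqnn 0)); apply: leq_maxr.
  rewrite /shift_lead; case: eqP => _ /=; last exact: polyfun_const.
  exact: polyfun_le (leq_maxl 1 D) (@polyfun_id K).
by move=> k n; rewrite ltimes_leadB ltimes_lead_shift_lead -ltimes_coef0 xiE subrr.
Qed.

Lemma psi_coef_succ M k n : (0 < M)%N ->
  psi k.+1 n M = \sum_(0 <= a < k.+1) \sum_(i < M)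
      psiprod psi k a n i * xi a (n - (2 * k)%N%:Z) (M - i)%N
    + (if (1 <= k)%N then psi k n M else 0).
Proof.
move=> M0; have -> : psi k.+1 n M = ltimes 0 psi xi k n M by rewrite xiE.
rewrite ltimes_coef // (eq_bigr (fun a => \sum_(i < M)
    psiprod psi k a n i * xi a (n - (2 * k)%N%:Z) (M - i)%N
  + psiprod psi k a n M * shift_lead a (n - (2 * k)%N%:Z))); last first.
  by move=> a _; rewrite big_ord_recr /= subnn solution_coef0.
rewrite big_split /=; congr (_ + _).
rewrite big_ltn // psiprod_0 /ps1 gtn_eqF // mul0r add0r.
case: k => [|k]; first by rewrite big_geq.
rewrite big_ltn // psiprod_1 // /shift_lead /= mulr1.
rewrite big_nat_cond big1 ?addr0 // => a /andP [/andP [a2 _] _].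
by rewrite !ifN ?mulr0 //; apply/eqP; lia.
Qed.

Lemma regular_of_shift_solution : regular 1 psi.
Proof.
have psiC : inC 1 psi by case: Hpsi.
suff psiD m : exists D, forall b l, (l <= m)%N -> polyfun D (fun n => psi b n l).
  by apply/regular_polyfun => m; have [D HD] := psiD m; exists D => k _; apply: HD.
elim: m => [|m [Dp psiD]].
  by exists 1%N => b l; rewrite leqn0 => /eqP ->; apply: polyfun_psi_coef0.
have [A xiA] := summable_bound_le xis m.+1.
have [Dx xiD] := regular_bound_le (inC_0 xi) xireg m.+1.
have psiMD b : polyfun (A * Dp + Dx) (fun n => psi b n m.+1).
  elim: b => [|k IH]; first by apply: polyfun_ext (polyfun_const _ 0) => n; rewrite psiC.
  apply: polyfun_ext (polyfun_add (polyfun_ltimes_partial (N := m.+1) k _ xiD xiA) _).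
  - by move=> n; rewrite psi_coef_succ.
  - by move=> b l; rewrite ltnS; apply: psiD.
  - by case: (1 <= k)%N => //; apply: polyfun_const.
exists (maxn Dp (A * Dp + Dx)) => b l; rewrite leq_eqVlt => /orP [/eqP -> | lm].
  by apply: polyfun_le (psiMD b); apply: leq_maxr.
by apply: polyfun_le (psiD b l lm); apply: leq_maxl.
Qed.

End Necessity.

Lemma verma_shift1 (K : fieldType) (psi : sqc K) : colouring psi -> verma 0 (shift1 psi).
Proof.
case=> _ _ _ C3; split=> [k n _ /andP [? ?] | k n _]; first by lia.
by rewrite /shift1 -C3 //; congr psi; lia.
Qed.

Lemma regular_shift1 (K : fieldType) (psi : sqc K) : regular 1 psi -> regular 0 (shift1 psi).
Proof. by move=> psireg m; have [D HD] := psireg m; exists D => k _; apply: HD. Qed.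

Theorem mainTheorem6 (K : fieldType) (charK : [pchar K] =i pred0)
  (psi : sqc K) (Hpsi : colouring psi) :
  ((exists xi : sqc K, inC 0 xi /\ regular 0 xi /\ summable xi /\
        ltimes 0 psi xi = shift1 psi)
     <-> regular 1 psi)
  /\
  (regular 1 psi -> forall d : nat,
     (forall (c : ps K) (xi eta : sqc K),
        inC d xi -> regular d xi -> summable xi ->
        inC d eta -> regular d eta -> summable eta ->
        ltimes d psi (sqc_add (sqc_scale c xi) eta)
          = sqc_add (sqc_scale c (ltimes d psi xi)) (ltimes d psi eta))
     /\
     (forall xi : sqc K, inC d xi -> regular d xi -> summable xi ->
        inC d (ltimes d psi xi) /\ regular d (ltimes d psi xi) /\ verma d (ltimes d psi xi))
     /\
     (forall xi eta : sqc K,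
        inC d xi -> regular d xi -> summable xi ->
        inC d eta -> regular d eta -> summable eta ->
        ltimes d psi xi = ltimes d psi eta -> xi = eta)
     /\
     (forall f : sqc K, inC d f -> regular d f -> verma d f ->
        exists xi : sqc K, inC d xi /\ regular d xi /\ summable xi /\ ltimes d psi xi = f)).
Proof.
have psiC : inC 1 psi by case: Hpsi.
split.
  split=> [[xi [_ [xireg [xis xiE]]]] | psireg].
    exact (regular_of_shift_solution charK Hpsi xireg xis xiE).
  exact (ltimes_surj charK Hpsi psireg (inC_0 _) (regular_shift1 psireg) (verma_shift1 Hpsi)).
move=> psireg d; split; first by move=> c xi eta *; apply: ltimes_linear.
split.
  move=> xi xiC xireg xis; split; first exact: inC_ltimes.
  by split; [apply: regular_ltimes | apply: ltimes_verma].
split; last by move=> f; apply: (ltimes_surj charK Hpsi psireg).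
move=> xi eta xiC xireg _ etaC etareg _.
exact: (ltimes_inj charK Hpsi xiC xireg etaC etareg).
Qed.
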